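(* Let $\phi=\frac{1+\sqrt5}{2}$ and let $\Gamma\subset SL_2(\mathbb R)$ be the group generated by $$\sigma_0=\begin{pmatrix}1&\phi\\0&1\end{pmatrix},\quad \sigma_1=\begin{pmatrix}\phi&\phi\\1&\phi\end{pmatrix},\quad \sigma_2=\begin{pmatrix}\phi&1\\\phi&\phi\end{pmatrix},\quad \sigma_3=\begin{pmatrix}1&0\\\phi&1\end{pmatrix}.$$ Let $S=\{\gamma\binom{1}{0}:\gamma\in\Gamma\}\subset\mathbb R^2$. There is a constant $C>0$ such that for every $0<\epsilon\le 1$ there exist two distinct points $s_1,s_2\in S$ with $\|s_1-s_2\|\le\epsilon$ and $s_1,s_2\in B(0,r)$, where $r\le C\epsilon^{-2}$.
   Context: $\|\cdot\|$ is the Euclidean norm on $\mathbb R^2$ and $B(0,r)$ is the closed ball of radius $r$ centered at the origin. $\Gamma$ acts on $\mathbb R^2$ by matrix multiplication on column vectors. *)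

From HB Require Import structures.
From mathcomp Require Import all_boot all_order all_algebra.
From mathcomp Require Import reals.
Set Implicit Arguments. Unset Strict Implicit. Unset Printing Implicit Defensive.
Import Order.TTheory GRing.Theory Num.Theory.
Local Open Scope ring_scope.

Section Defs.
Variable R : realType.

Definition phi : R := (1 + Num.sqrt 5) / 2.

Definition mx2 (a b c d : R) : 'M[R]_2 :=
  \matrix_(i < 2, j < 2)
    (if i == 0 :> nat then (if j == 0 :> nat then a else b)
     else (if j == 0 :> nat then c else d)).

Definition sigma (k : 'I_4) : 'M[R]_2 :=
  match val k with
  | 0 => mx2 1 phi 0 1
  | 1 => mx2 phi phi 1 phi
  | 2 => mx2 phi 1 phi phi
  | _ => mx2 1 0 phi 1
  end.

Inductive inGamma : 'M[R]_2 -> Prop :=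
  | Gamma_one : inGamma 1%:M
  | Gamma_mul k g : inGamma g -> inGamma (sigma k *m g)
  | Gamma_mulV k g : inGamma g -> inGamma (invmx (sigma k) *m g).

Definition e1 : 'cV[R]_2 := \col_(i < 2) (if i == 0 :> nat then 1 else 0).

Definition inS (v : 'cV[R]_2) : Prop := exists2 g, inGamma g & v = g *m e1.

Definition enorm (v : 'cV[R]_2) : R :=
  Num.sqrt (v 0 0 ^+ 2 + v 1 0 ^+ 2).

End Defs.

From Pilot Require Import Defs.
From HB Require Import structures.
From mathcomp Require Import all_boot all_order all_algebra.
From mathcomp Require Import reals.
From mathcomp Require Import ring lra.
Import Order.TTheory GRing.Theory Num.Theory.
Local Open Scope ring_scope.
Set Implicit Arguments.
Unset Strict Implicit.
Unset Printing Implicit Defensive.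

(* Put t = phi^(-2k). As phi^(-2) = 2 - phi, induction on k gives naturals p, q with
   p - q phi = t and (p + q/phi) t = 1 (p - q phi is a unit of Z[phi]), so p <= 1/t.
   The orbit points sigma_0^p (phi, 1) and sigma_0^q (phi, phi) have first coordinates
   differing by phi t; applying sigma_3^n, which adds n phi x to the second coordinate,
   with n the integer part of (phi - 1) / (phi^2 t), brings their second coordinates
   within phi^2 t of each other, while both points keep norm O(t^-2).  Choosing k with
   t comparable to eps proves the statement. *)

Lemma exprn_Bernoulli_le1 (R : realDomainType) (c : R) (k : nat) :
  0 <= c -> c <= 1 -> c ^+ k * (1 + k%:R * (1 - c)) <= 1.
Proof.
move=> c_ge0 c_le1; elim: k => [|k IHk]; first by rewrite expr0 mul0r addr0 mulr1.
have head : c * (c ^+ k * (1 + k%:R * (1 - c))) <= c by rewrite ler_piMr // exprn_ge0.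
have tail : c ^+ k.+1 * (1 - c) <= 1 - c by rewrite ler_piMl ?subr_ge0 ?exprn_ge0 ?exprn_ile1.
have -> : c ^+ k.+1 * (1 + k.+1%:R * (1 - c))
        = c * (c ^+ k * (1 + k%:R * (1 - c))) + c ^+ k.+1 * (1 - c).
  by rewrite exprS -natr1; ring.
by apply: le_trans (lerD head tail) _; rewrite addrC subrK.
Qed.

Lemma exists_exprn_le (R : archiFieldType) (c eta : R) :
  0 <= c -> c < 1 -> 0 < eta -> exists k, c ^+ k <= eta.
Proof.
move=> c_ge0 c_lt1 eta_gt0; have d_gt0 : 0 < (1 - c) * eta by rewrite mulr_gt0 ?subr_gt0.
exists (Num.bound ((1 - c) * eta)^-1); set k := Num.bound _.
have k_ge : 1 <= (1 - c) * eta * k%:R.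
  by rewrite -ler_pdivrMl // mulr1 ltW // archi_boundP // invr_ge0 ltW.
have := exprn_Bernoulli_le1 k c_ge0 (ltW c_lt1).
have : 0 <= c ^+ k by rewrite exprn_ge0.
nra.
Qed.

Lemma exists_exprn_bracket (R : archiFieldType) (c eta : R) :
  0 < c < 1 -> 0 < eta <= 1 -> exists k, c * eta <= c ^+ k <= eta.
Proof.
move=> /andP[c_gt0 c_lt1] /andP[eta_gt0 eta_le1].
have /ex_minnP[k k_le k_min] : exists k, c ^+ k <= eta.
  exact: exists_exprn_le (ltW c_gt0) c_lt1 eta_gt0.
exists k; rewrite k_le andbT.
case: k k_le k_min => [_ _|k _ k_min].
- by rewrite expr0; apply: mulr_ile1 => //; apply: ltW.
- rewrite exprS ler_pM2l //; apply: ltW; rewrite ltNge.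
  by apply/negP => /k_min; rewrite ltnn.
Qed.

Lemma golden_pow_decomposition (R : comRingType) (g : R) (k : nat) :
  g ^+ 2 = 1 - g ->
  exists p q : nat, (g ^+ 2) ^+ k = p%:R - q%:R * (1 + g)
                 /\ (p%:R + q%:R * g) * (g ^+ 2) ^+ k = 1.
Proof.
move=> g2E; have g2_0 : g ^+ 2 - (1 - g) = 0 by rewrite g2E subrr.
elim: k => [|k [p [q [tE normE]]]].
  by exists 1%N, 0%N; rewrite expr0 mulr1 !mul0r addr0 subr0.
exists (p.*2 + q)%N, (p + q)%N; rewrite exprSr !natrD -addnn natrD; split.
- apply/eqP; rewrite -subr_eq0 tE.
  have -> : (p%:R - q%:R * (1 + g)) * g ^+ 2 - (p%:R + p%:R + q%:R - (p%:R + q%:R) * (1 + g))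
          = (p%:R - q%:R * g) * (g ^+ 2 - (1 - g)) by ring.
  by rewrite g2_0 mulr0.
- apply: (etrans _ normE); apply/eqP; rewrite -subr_eq0.
  have -> : (p%:R + p%:R + q%:R + (p%:R + q%:R) * g) * ((g ^+ 2) ^+ k * g ^+ 2)
            - (p%:R + q%:R * g) * (g ^+ 2) ^+ k
          = (g ^+ 2) ^+ k * (p%:R + (p%:R + q%:R) * g) * (g ^+ 2 - (1 - g)) by ring.
  by rewrite g2_0 mulr0.
Qed.

Section GoldenOrbit.
Variable R : realType.
Local Notation phi := (phi R).

Definition vec2 (x y : R) : 'cV[R]_2 := \col_(i < 2) (if i == 0 :> nat then x else y).

Lemma mx2_mulmx_vec2 a b c d x y :
  mx2 a b c d *m vec2 x y = vec2 (a * x + b * y) (c * x + d * y).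
Proof.
apply/matrixP => i j; rewrite !mxE big_ord_recr big_ord_recl big_ord0 /= !mxE.
by case: i => [[|[|i]] Hi] //=; rewrite addr0.
Qed.

Lemma vec2B x y x' y' : vec2 x y - vec2 x' y' = vec2 (x - x') (y - y').
Proof. by apply/matrixP => i j; rewrite !mxE; case: ifP. Qed.

Lemma vec2_inj1 x y x' y' : vec2 x y = vec2 x' y' -> x = x'.
Proof. by move/(congr1 (fun v : 'cV[R]_2 => v 0 0)); rewrite !mxE. Qed.

Lemma enorm_vec2_le x y : enorm (vec2 x y) <= `|x| + `|y|.
Proof.
rewrite /enorm !mxE /= -[leRHS]ger0_norm ?addr_ge0 // -sqrtr_sqr.
rewrite ler_wsqrtr // -[x ^+ 2]real_normK ?num_real // -[y ^+ 2]real_normK ?num_real //.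
by rewrite sqrrD -addrA lerD2l lerDr mulrn_wge0 // mulr_ge0.
Qed.

Lemma enorm_vec2_le_add x y : 0 <= x -> 0 <= y -> enorm (vec2 x y) <= x + y.
Proof. by move=> x_ge0 y_ge0; have := enorm_vec2_le x y; rewrite !ger0_norm. Qed.

Lemma inS_vec2_10 : inS (vec2 1 0).
Proof. by exists 1%:M; [exact: Gamma_one | rewrite mul1mx]. Qed.

Lemma inS_sigma k v : inS v -> inS (sigma R k *m v).
Proof. by case=> g Gg ->; exists (sigma R k *m g); [exact: Gamma_mul | rewrite mulmxA]. Qed.

Lemma inS_sigma_vec2_10 k : inS (sigma R k *m vec2 1 0).
Proof. exact/inS_sigma/inS_vec2_10. Qed.

Lemma inS_sigma0_pow (m : nat) x y : inS (vec2 x y) -> inS (vec2 (x + m%:R * phi * y) y).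
Proof.
move=> Sxy; elim: m => [|m IHm]; first by rewrite !mul0r addr0.
have := inS_sigma (@Ordinal 4 0 isT) IHm; rewrite /sigma /= mx2_mulmx_vec2.
by congr (inS (vec2 _ _)); rewrite -?natr1; ring.
Qed.

Lemma inS_sigma3_pow (n : nat) x y : inS (vec2 x y) -> inS (vec2 x (y + n%:R * phi * x)).
Proof.
move=> Sxy; elim: n => [|n IHn]; first by rewrite !mul0r addr0.
have := inS_sigma (@Ordinal 4 3 isT) IHn; rewrite /sigma /= mx2_mulmx_vec2.
by congr (inS (vec2 _ _)); rewrite -?natr1; ring.
Qed.

Lemma inS_vec2_phi_1 : inS (vec2 phi 1).
Proof.
have := inS_sigma_vec2_10 (@Ordinal 4 1 isT).
by rewrite /sigma /= mx2_mulmx_vec2 !mulr1 !mulr0 !addr0.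
Qed.

Lemma inS_vec2_phi_phi : inS (vec2 phi phi).
Proof.
have := inS_sigma_vec2_10 (@Ordinal 4 2 isT).
by rewrite /sigma /= mx2_mulmx_vec2 !mulr1 !mulr0 !addr0.
Qed.

Definition iphi : R := phi - 1.

Lemma phiE : phi = 1 + iphi.
Proof. by rewrite /iphi addrC subrK. Qed.

Lemma iphiE : iphi = (Num.sqrt 5 - 1) / 2.
Proof. by rewrite /iphi /Defs.phi; field. Qed.

Lemma iphi_sqr : iphi ^+ 2 = 1 - iphi.
Proof.
apply/eqP; rewrite -subr_eq0 iphiE.
have -> : ((Num.sqrt 5 - 1) / 2) ^+ 2 - (1 - (Num.sqrt 5 - 1) / 2) = (Num.sqrt 5 ^+ 2 - 5) / 4 :> R
  by field.
by rewrite sqr_sqrtr // subrr mul0r.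
Qed.

Lemma iphi_gt0 : 0 < iphi.
Proof.
rewrite iphiE divr_gt0 // subr_gt0.
have := sqrtr_ge0 (5 : R); have := sqr_sqrtr (ler0n R 5); nra.
Qed.

Lemma iphi_lt1 : iphi < 1.
Proof.
have := iphi_gt0; have := iphi_sqr; nra.
Qed.

Lemma phi_mul_iphi : phi * iphi = 1.
Proof. by rewrite phiE mulrDl mul1r -expr2 iphi_sqr addrC subrK. Qed.

Lemma phiX_mul_iphiX m : phi ^+ m * iphi ^+ m = 1.
Proof. by rewrite -exprMn phi_mul_iphi expr1n. Qed.

Lemma phi_gt0 : 0 < phi.
Proof. by rewrite phiE addr_gt0 // iphi_gt0. Qed.

Lemma phi_sqr : phi ^+ 2 = phi + 1.
Proof. by rewrite phiE sqrrD iphi_sqr; ring. Qed.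

Lemma shear_close (x1 y1 x2 y2 : R) : x2 < x1 -> y1 <= y2 ->
  exists n : nat, n%:R * (phi * (x1 - x2)) <= y2 - y1 /\
    `|(y1 + n%:R * phi * x1) - (y2 + n%:R * phi * x2)| <= phi * (x1 - x2).
Proof.
rewrite -subr_gt0 -subr_ge0 => dx_gt0 dy_ge0.
have d_gt0 : 0 < phi * (x1 - x2) by rewrite mulr_gt0 // phi_gt0.
have /andP[n_le n_gt] := truncn_itv (divr_ge0 dy_ge0 (ltW d_gt0)).
rewrite ler_pdivlMr // in n_le; rewrite ltr_pdivrMr // -natr1 in n_gt.
exists (Num.truncn ((y2 - y1) / (phi * (x1 - x2)))); split=> //.
set n := Num.truncn _ in n_le n_gt *.
have -> : y1 + n%:R * phi * x1 - (y2 + n%:R * phi * x2)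
        = n%:R * (phi * (x1 - x2)) - (y2 - y1) by ring.
by rewrite ler0_norm ?subr_le0 //; lra.
Qed.

Lemma enorm_shear_le (n : nat) (x X c : R) : 0 <= x -> x <= X -> 0 <= c -> c <= phi ->
  enorm (vec2 x (c + n%:R * phi * x)) <= phi + X * (1 + n%:R * phi).
Proof.
move=> x_ge0 x_le c_ge0 c_le.
have nphi_ge0 : 0 <= n%:R * phi by rewrite mulr_ge0 // ltW // phi_gt0.
have nphix_ge0 : 0 <= n%:R * phi * x by rewrite mulr_ge0.
apply: le_trans (enorm_vec2_le_add _ _) _; rewrite ?addr_ge0 //.
have : n%:R * phi * x <= n%:R * phi * X by rewrite ler_wpM2l.
have -> : X * (1 + n%:R * phi) = X + n%:R * phi * X by ring.
lra.
Qed.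

Lemma shear_radius_le (n : nat) (x t : R) : 0 < t -> t <= 1 -> 0 <= x ->
  x * t <= 2 * phi -> n%:R * (phi * (phi * t)) <= iphi ->
  phi + x * (1 + n%:R * phi) <= 8 / t ^+ 2.
Proof.
move=> t_gt0 t_le1 x_ge0 xt_le n_le.
have phi_ge0 := ltW phi_gt0; have t_ge0 := ltW t_gt0.
have nphit_le : n%:R * phi * t <= iphi ^+ 2.
  have <- : n%:R * (phi * (phi * t)) * iphi = n%:R * phi * t.
    by rewrite -[RHS]mulr1 -phi_mul_iphi; ring.
  by rewrite expr2 ler_wpM2r // ltW // iphi_gt0.
have xt_ge0 : 0 <= x * t by rewrite mulr_ge0.
have nphit_ge0 : 0 <= n%:R * phi * t by rewrite mulr_ge0 // mulr_ge0.
have h1 : phi * t ^+ 2 <= phi by rewrite ler_piMr ?exprn_ge0 ?exprn_ile1.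
have h2 : x * t * t <= 2 * phi by apply: (le_trans _ xt_le); rewrite ler_piMr.
have h3 : x * t * (n%:R * phi * t) <= 2 * iphi.
  have <- : 2 * phi * iphi ^+ 2 = 2 * iphi.
    by rewrite -mulrA expr2 [phi * _]mulrA phi_mul_iphi mul1r.
  by rewrite ler_pM.
rewrite ler_pdivlMr ?exprn_gt0 //.
have -> : (phi + x * (1 + n%:R * phi)) * t ^+ 2
        = phi * t ^+ 2 + x * t * t + x * t * (n%:R * phi * t) by ring.
by have := phiE; have := iphi_lt1; lra.
Qed.

Lemma close_orbit_pair (k : nat) (t := (iphi ^+ 2) ^+ k) :
  exists s1 s2 : 'cV[R]_2, [/\ inS s1, inS s2 & s1 <> s2] /\
    [/\ enorm (s1 - s2) <= phi ^+ 3 * t, enorm s1 <= 8 / t ^+ 2 & enorm s2 <= 8 / t ^+ 2].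
Proof.
have phi_ge0 := ltW phi_gt0.
have [p [q [tE normE]]] := golden_pow_decomposition k iphi_sqr.
rewrite -/t -phiE in tE normE.
have t_gt0 : 0 < t by rewrite !exprn_gt0 ?iphi_gt0.
have t_le1 : t <= 1.
  by apply: exprn_ile1; rewrite ?sqr_ge0 // iphi_sqr; have := iphi_gt0; lra.
have pt_le1 : p%:R * t <= 1.
  by rewrite -[leRHS]normE mulrDl lerDl !mulr_ge0 // ltW // iphi_gt0.
set x1 := phi + p%:R * phi * 1; set x2 := phi + q%:R * phi * phi.
have dx : x1 - x2 = phi * t by rewrite tE /x1 /x2; ring.
have x2_ge0 : 0 <= x2 by rewrite /x2 addr_ge0 // mulr_ge0 // mulr_ge0.
have x2_lt : x2 < x1 by rewrite -subr_gt0 dx mulr_gt0 // phi_gt0.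
have x1t_le : x1 * t <= 2 * phi.
  have : p%:R * phi * t <= phi by rewrite mulrAC ler_piMl.
  have : phi * t <= phi by rewrite ler_piMr.
  by rewrite /x1 mulr1; lra.
have phi_ge1 : 1 <= phi by rewrite phiE lerDl ltW // iphi_gt0.
have [n [n_le dy_le]] := shear_close (y1 := 1) (y2 := phi) x2_lt phi_ge1.
rewrite dx -/iphi in n_le dy_le.
exists (vec2 x1 (1 + n%:R * phi * x1)), (vec2 x2 (phi + n%:R * phi * x2)); split.
  split; [exact/inS_sigma3_pow/inS_sigma0_pow/inS_vec2_phi_1
         |exact/inS_sigma3_pow/inS_sigma0_pow/inS_vec2_phi_phi|].
  by move/vec2_inj1/eqP; rewrite gt_eqF.
have x1_ge0 := le_trans x2_ge0 (ltW x2_lt).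
have radius_le := shear_radius_le t_gt0 t_le1 x1_ge0 x1t_le n_le.
split.
- rewrite vec2B; apply: le_trans (enorm_vec2_le _ _) _.
  rewrite ger0_norm ?subr_ge0 ?(ltW x2_lt) // dx.
  have -> : phi ^+ 3 * t = phi * t + phi * (phi * t) by rewrite exprS phi_sqr; ring.
  lra.
- by apply: (le_trans _ radius_le); apply: enorm_shear_le.
- by apply: (le_trans _ radius_le); apply: enorm_shear_le => //; apply: ltW.
Qed.
End GoldenOrbit.

Theorem proposition1p2 (R : realType) :
  exists2 C : R, 0 < C &
  forall eps : R, 0 < eps -> eps <= 1 ->
    exists r : R, r <= C / eps ^+ 2 /\
    exists s1 s2 : 'cV[R]_2,
      [/\ inS s1, inS s2 & s1 <> s2] /\
      [/\ enorm (s1 - s2) <= eps, enorm s1 <= r & enorm s2 <= r].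
Proof.
have phi_ge0 := ltW (@phi_gt0 R); have iphi_gt0 := @iphi_gt0 R.
have iphi_ge0 := ltW iphi_gt0; have iphi_lt1 := @iphi_lt1 R.
exists (8 * (phi R ^+ 5) ^+ 2); first by rewrite mulr_gt0 ?exprn_gt0 ?phi_gt0.
move=> eps eps_gt0 eps_le1; have eps_ge0 := ltW eps_gt0.
have [k /andP[t_ge t_le]] :
    exists k, iphi R ^+ 2 * (iphi R ^+ 3 * eps) <= (iphi R ^+ 2) ^+ k <= iphi R ^+ 3 * eps.
  apply: exists_exprn_bracket; first by rewrite exprn_gt0 // expr_lt1.
  by rewrite mulr_gt0 ?exprn_gt0 //= mulr_ile1 ?exprn_ge0 ?exprn_ile1 // ltW.
have [s1 [s2 [S12 [d12 s1_le s2_le]]]] := close_orbit_pair R k.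
set t := (iphi R ^+ 2) ^+ k in t_ge t_le d12 s1_le s2_le.
have eps_le : eps <= phi R ^+ 5 * t.
  rewrite -[leLHS]mul1r -(phiX_mul_iphiX R 5) -mulrA ler_wpM2l ?exprn_ge0 //.
  by rewrite mulrA -exprD in t_ge.
have t_gt0 : 0 < t by rewrite exprn_gt0 ?exprn_gt0.
exists (8 / t ^+ 2); split.
  rewrite ler_pdivrMr ?exprn_gt0 // mulrAC ler_pdivlMr ?exprn_gt0 // -mulrA ler_pM2l //.
  by rewrite -exprMn ler_sqr ?nnegrE // (le_trans eps_ge0 eps_le).
exists s1, s2; split=> //; split=> //; apply: le_trans d12 _.
by rewrite -[leRHS]mul1r -(phiX_mul_iphiX R 3) -mulrA ler_wpM2l ?exprn_ge0.
Qed.
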